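(* Let $(A,Q_0,\unlhd)$ be a left standardly stratified algebra and let $e\in A$ be an idempotent supported in $Q_0'$. If the $A$-module $A/AeA$ has a $\Delta$-filtration and the $A$-module $D(A/AeA)$ has a $\bar\nabla$-filtration, then $Q_0'$ is a coideal of the essential order $(Q_0,\unlhd_{\mathrm{ess}})$ associated to $(A,Q_0,\unlhd)$.
   Context: All algebras finite-dimensional over a field $\Bbbk$, modules finite-dimensional left modules, $D=\mathrm{Hom}_\Bbbk(-,\Bbbk)$. Simples labelled by a finite poset $(Q_0,\unlhd)$: $L_i$, projective cover $P_i$, injective hull $I_i$, multiplicity $[X:L_i]$. Standard $\Delta_i$: largest quotient of $P_i$ with composition factors $L_j$, $j\unlhd i$; costandard $\nabla_i$: largest submodule of $I_i$ with composition factors $L_j$, $j\unlhd i$; proper costandard $\bar\nabla_i$: largest submodule $X$ of $\nabla_i$ with $[X:L_i]=1$. $\Delta$-/$\bar\nabla$-filtration: filtration with subquotients standard/proper costandard modules. $A$ is left standardly stratified if each kernel of $P_i\to\Delta_i$ is filtered by $\Delta_j$, $j\rhd i$. Support of $e$: $\{i:eL_i\ne0\}$. The essential order $\unlhd_{\mathrm{ess}}$ is the smallest partial order on $Q_0$ with $j\unlhd_{\mathrm{ess}}i$ whenever $[\Delta_i:L_j]\ne0$ or $[\bar\nabla_i:L_j]\ne0$. A coideal of $(Q_0,\unlhd_{\mathrm{ess}})$ is a subset $S$ with $i\unlhd_{\mathrm{ess}}j$, $i\in S$ $\Rightarrow$ $j\in S$. *)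

(* Finite-dimensional algebras are MathComp [falgType F]
   (finite-dimensional unital F-algebras); finite-dimensional left modules are
   given concretely by matrices acting on row vectors. *)
From HB Require Import structures.
From mathcomp Require Import all_boot all_order all_algebra all_field.
From Stdlib Require Import Relations.

Set Implicit Arguments.
Unset Strict Implicit.
Unset Printing Implicit Defensive.

Import GRing.Theory.
Local Open Scope ring_scope.

Section Modules.
Variables (F : fieldType) (A : falgType F).

(* A (finite-dimensional) left A-module: the space 'rV[F]_ldim, where
   a . v := v *m lact a.  Left-module axioms are the predicate [lmodP]. *)
Record lmod := LMod { ldim : nat; lact : A -> 'M[F]_ldim }.

Definition lmodP (M : lmod) : Prop :=
  [/\ forall (k : F) (a b : A), lact M (k *: a + b) = k *: lact M a + lact M b,
      lact M 1 = 1%:M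
    & forall a b : A, lact M (a * b) = lact M b *m lact M a].

(* submodules of M, represented by (square) matrices, i.e. their row spaces *)
Definition submod (M : lmod) (U : 'M[F]_(ldim M)) : Prop :=
  forall a : A, (U *m lact M a <= U)%MS.

Definition mhom (M N : lmod) (f : 'M[F]_(ldim M, ldim N)) : Prop :=
  forall a : A, lact M a *m f = f *m lact N a.

(* the subquotient V/U of M is isomorphic to the subquotient V'/U' of N *)
Definition sq_iso (M : lmod) (U V : 'M[F]_(ldim M))
                  (N : lmod) (U' V' : 'M[F]_(ldim N)) : Prop :=
  exists f : 'M[F]_(ldim M, ldim N),
    [/\ (V *m f <= V')%MS, (U *m f <= U')%MS,
        forall v : 'rV[F]_(ldim M), (v <= V)%MS -> (v *m f <= U')%MS -> (v <= U)%MS,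
        (V' <= V *m f + U')%MS
      & forall (a : A) (v : 'rV[F]_(ldim M)), (v <= V)%MS ->
          (v *m lact M a *m f - v *m f *m lact N a <= U')%MS].

Arguments sq_iso M U V N U' V' : clear implicits.

Definition miso (M N : lmod) : Prop := sq_iso M 0 1%:M N 0 1%:M.

Definition simple_sq (M : lmod) (U V : 'M[F]_(ldim M)) : Prop :=
  [/\ submod U, submod V, (U < V)%MS &
      forall X, submod X -> (U <= X)%MS -> (X <= V)%MS -> (X == U)%MS \/ (X == V)%MS].

Arguments simple_sq M U V : clear implicits.

Definition simple_mod (M : lmod) : Prop := simple_sq M 0 1%:M.

Definition chain (M : lmod) (U V : 'M[F]_(ldim M)) (k : nat)
                 (W : nat -> 'M[F]_(ldim M)) : Prop :=
  [/\ (W 0%N == U)%MS, (W k == V)%MS,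
      forall t, (t <= k)%N -> submod (W t)
    & forall t, (t < k)%N -> (W t <= W t.+1)%MS].

Definition compser (M : lmod) (U V : 'M[F]_(ldim M)) (k : nat)
                   (W : nat -> 'M[F]_(ldim M)) : Prop :=
  chain U V k W /\ forall t, (t < k)%N -> simple_sq M (W t) (W t.+1).

(* [V/U : S] = n, the composition multiplicity of the simple module S in
   the subquotient V/U, computed along some composition series (it is
   independent of the series by Jordan-Hoelder). *)
Definition mult_is (M : lmod) (U V : 'M[F]_(ldim M)) (S : lmod) (n : nat) : Prop :=
  exists k W (T : seq nat),
    [/\ compser U V k W, uniq T, size T = n &
        forall t, t \in T <-> ((t < k)%N /\ sq_iso M (W t) (W t.+1) S 0 1%:M)].

Definition factors_in (M : lmod) (U V : 'M[F]_(ldim M)) (I : Type)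
           (S : I -> lmod) (p : I -> Prop) : Prop :=
  exists k W, compser U V k W /\
    forall t, (t < k)%N -> exists j, p j /\ sq_iso M (W t) (W t.+1) (S j) 0 1%:M.

Definition filtered (M : lmod) (U V : 'M[F]_(ldim M)) (I : Type)
   (N : I -> lmod) (Uj Vj : forall j, 'M[F]_(ldim (N j))) (p : I -> Prop) : Prop :=
  exists k W, chain U V k W /\
    forall t, (t < k)%N -> exists j, p j /\ sq_iso M (W t) (W t.+1) (N j) (Uj j) (Vj j).

Definition projective (M : lmod) : Prop :=
  forall (N N' : lmod) (g : 'M[F]_(ldim N, ldim N')) (f : 'M[F]_(ldim M, ldim N')),
    lmodP N -> lmodP N' -> mhom g -> row_full g -> mhom f ->
    exists h : 'M[F]_(ldim M, ldim N), mhom h /\ h *m g = f.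

Definition injective_mod (M : lmod) : Prop :=
  forall (N' N : lmod) (g : 'M[F]_(ldim N', ldim N)) (f : 'M[F]_(ldim N', ldim M)),
    lmodP N -> lmodP N' -> mhom g -> row_free g -> mhom f ->
    exists h : 'M[F]_(ldim N, ldim M), mhom h /\ g *m h = f.

Definition proj_cover (P S : lmod) : Prop :=
  [/\ lmodP P, projective P &
      exists p : 'M[F]_(ldim P, ldim S), [/\ mhom p, row_full p &
        forall U : 'M[F]_(ldim P), submod U ->
          (1%:M <= U + kermx p)%MS -> ((1%:M : 'M[F]_(ldim P)) <= U)%MS]].

Definition inj_hull (I S : lmod) : Prop :=
  [/\ lmodP I, injective_mod I &
      exists i : 'M[F]_(ldim S, ldim I), [/\ mhom i, row_free i &
        forall U : 'M[F]_(ldim I), submod U ->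
          (U :&: i <= (0 : 'M[F]_(ldim I)))%MS -> (U <= (0 : 'M[F]_(ldim I)))%MS]].

Definition rdim : nat := \dim (fullv : {vspace A}).
Definition rbasis : rdim.-tuple A := vbasis fullv.

(* left regular module A: row i of lact a = coordinates of a * b_i *)
Definition regmod : lmod :=
  @LMod rdim (fun a => \matrix_(i, j) coord rbasis j (a * tnth rbasis i)).

Definition rmulmx (a : A) : 'M[F]_rdim :=
  \matrix_(i, j) coord rbasis j (tnth rbasis i * a).

(* D(A_A) = Hom_F(A, F) as a left module: a row vector phi represents the
   functional x |-> coords(x) *m phi^T, and (a . phi)(x) = phi(x a). *)
Definition dualreg : lmod := @LMod rdim (fun a => (rmulmx a)^T).

Definition AeA (e : A) : {vspace A} := prodv (prodv fullv <[e]>%VS) fullv.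
Definition AeAmx (e : A) : 'M[F]_(\dim (AeA e), rdim) :=
  \matrix_(i, j) coord rbasis j (tnth (vbasis (AeA e)) i).

(* A/AeA as a left A-module = subquotient A / AeA of the regular module *)
Definition quot_lo (e : A) : 'M[F]_rdim := <<AeAmx e>>%MS.
(* D(A/AeA) = functionals vanishing on AeA: a submodule of D(A_A) *)
Definition dquot (e : A) : 'M[F]_rdim := kermx (AeAmx e)^T.

Definition supp (Q : Type) (L : Q -> lmod) (e : A) (i : Q) : Prop :=
  lact (L i) e != 0.

End Modules.

Arguments filtered {F A M} U V {I} N Uj Vj p.
Arguments sq_iso {F A} M U V N U' V'.
Arguments simple_sq {F A} M U V.

Definition rt_closure (Q : Type) (R : Q -> Q -> Prop) : Q -> Q -> Prop :=
  clos_refl_trans Q R.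

Definition coideal (Q : Type) (le : Q -> Q -> Prop) (S : Q -> Prop) : Prop :=
  forall i j, le i j -> S i -> S j.

(* If e L_i = 0, then L_i is an A/AeA-module, so there are nonzero module maps
   A/AeA -> L_i and L_i -> D(A/AeA).  The first layer of the Delta-filtration
   of A/AeA on which the first map does not vanish yields a nonzero map
   Delta_j -> L_i, and since Delta_j has simple top L_j, j = i; dually, the
   Nb-filtration of D(A/AeA) yields a nonzero map L_i -> Nb_j, and Nb_j has
   simple socle L_j.  Hence Delta_i and Nb_i are subquotients of A/AeA and of
   D(A/AeA), on which e acts as zero, so e L_j = 0 for every composition factor
   L_j of either.  This is the coideal property for the generating relation,
   and it passes to the reflexive-transitive closure. *)

From HB Require Import structures.
From mathcomp Require Import all_boot all_order all_algebra all_field.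
From Stdlib Require Import Relations.
Import GRing.Theory.
Local Open Scope ring_scope.
Set Implicit Arguments.
Unset Strict Implicit.

Section ModuleTheory.
Variables (F : fieldType) (A : falgType F).
Implicit Types (M N S : lmod A) (e : A).

Section Action.
Variable M : lmod A.
Hypothesis HM : lmodP M.

Lemma lactD : {morph lact M : a b / a + b}.
Proof. by case: HM => HZ _ _ a b; have := HZ 1 a b; rewrite !scale1r. Qed.

Lemma lact0 : lact M 0 = 0.
Proof. by apply: (addrI (lact M 0)); rewrite -lactD !addr0. Qed.

Lemma lactZ k a : lact M (k *: a) = k *: lact M a.
Proof. by case: HM => HZ _ _; have := HZ k a 0; rewrite lact0 !addr0. Qed.

Lemma lact1 : lact M 1 = 1%:M.
Proof. by case: HM. Qed.

Lemma lactM a b : lact M (a * b) = lact M b *m lact M a.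
Proof. by case: HM. Qed.

Lemma lact_sum I r (P : pred I) (G : I -> A) :
  lact M (\sum_(i <- r | P i) G i) = \sum_(i <- r | P i) lact M (G i).
Proof. exact: (big_morph _ lactD lact0). Qed.

Lemma lact_coord x :
  lact M x = \sum_k coord (rbasis A) k x *: lact M (tnth (rbasis A) k).
Proof.
rewrite {1}(coord_vbasis (memvf x)) lact_sum; apply: eq_bigr => k _.
by rewrite lactZ (tnth_nth 0).
Qed.

Lemma lact_span_eq0 (X : seq A) y :
  {in X, forall x, lact M x = 0} -> y \in <<X>>%VS -> lact M y = 0.
Proof.
move=> HX /(@coord_span _ _ _ (in_tuple X)) ->; rewrite lact_sum big1 // => i _.
by rewrite lactZ HX ?scaler0 ?mem_nth.
Qed.

Lemma lact_prodv_eq0 (U V : {vspace A}) y :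
  {in U & V, forall u v, lact M (u * v) = 0} -> y \in (U * V)%VS -> lact M y = 0.
Proof.
move=> HUV; rewrite unlock; apply: lact_span_eq0 => _ /allpairsP[[u v] /= [Hu Hv ->]].
by apply: HUV; apply: vbasis_mem.
Qed.

Lemma lact_AeA_eq0 e y : lact M e = 0 -> y \in AeA e -> lact M y = 0.
Proof.
move=> He; apply: lact_prodv_eq0 => u v Hu _; rewrite lactM.
suff -> : lact M u = 0 by rewrite mulmx0.
apply: lact_prodv_eq0 Hu => x _ _ /vlineP[k ->].
by rewrite lactM lactZ He scaler0 mul0mx.
Qed.

End Action.

Lemma submod0 M : submod (0 : 'M[F]_(ldim M)).
Proof. by move=> a; rewrite mul0mx sub0mx. Qed.

Lemma submod_genmx M m (X : 'M[F]_(m, ldim M)) :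
  (forall a, X *m lact M a <= X)%MS -> submod <<X>>%MS.
Proof. by move=> HX a; rewrite (eqmxMr _ (genmxE X)) genmxE. Qed.

Lemma submod_img M N (h : 'M[F]_(ldim M, ldim N)) (X : 'M[F]_(ldim M)) :
  mhom h -> submod X -> submod <<X *m h>>%MS.
Proof. by move=> Hh HX; apply: submod_genmx => a; rewrite -mulmxA -Hh mulmxA submxMr. Qed.

Lemma submod_ker M N (h : 'M[F]_(ldim M, ldim N)) : mhom h -> submod (kermx h).
Proof. by move=> Hh a; rewrite sub_kermx -mulmxA Hh mulmxA mulmx_ker mul0mx. Qed.

Lemma submod_cap M (U V : 'M[F]_(ldim M)) : submod U -> submod V -> submod (U :&: V)%MS.
Proof.
move=> HU HV a; rewrite sub_capmx.
by rewrite (submx_trans (submxMr _ (capmxSl U V)) (HU a))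
           (submx_trans (submxMr _ (capmxSr U V)) (HV a)).
Qed.

Lemma submod_imgmx M N (h : 'M[F]_(ldim M, ldim N)) : mhom h -> submod <<h>>%MS.
Proof. by move=> Hh; apply: submod_genmx => a; rewrite -Hh submxMl. Qed.

Lemma genmx_eq0 m n (X : 'M[F]_(m, n)) : (<<X>>%MS == 0) = (X == 0).
Proof. by rewrite -!submx0 genmxE. Qed.

Lemma full_kermx_eq0 m n (h : 'M[F]_(m, n)) : (1%:M <= kermx h)%MS -> h = 0.
Proof. by move/sub_kermxP; rewrite mul1mx. Qed.

Lemma sub1mx_addker m n p (X : 'M[F]_(m, n)) (h : 'M[F]_(n, p)) :
  (h <= X *m h)%MS -> (1%:M <= X + kermx h)%MS.
Proof.
case/submxP=> D hD; rewrite -[1%:M](subrK (D *m X)) addsmxC.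
rewrite addmx_sub_adds ?submxMl //; apply/sub_kermxP.
by rewrite mulmxBl mul1mx -mulmxA -hD subrr.
Qed.

Section SubquotientIso.
Variables (M N : lmod A) (U V : 'M[F]_(ldim M)) (U' : 'M[F]_(ldim N)).
Variable f : 'M[F]_(ldim M, ldim N).

Lemma sq_iso_inj_mx :
  (forall v : 'rV_(ldim M), (v <= V)%MS -> (v *m f <= U')%MS -> (v <= U)%MS) ->
  forall m (X : 'M_(m, ldim M)), (X <= V)%MS -> (X *m f <= U')%MS -> (X <= U)%MS.
Proof.
move=> Hinj m X sXV sXfU; apply/row_subP => i; apply: Hinj.
  exact: submx_trans (row_sub i X) sXV.
by rewrite -row_mul (submx_trans (row_sub i _) sXfU).
Qed.

Lemma sq_iso_hom_mx :
  (forall a (v : 'rV_(ldim M)), (v <= V)%MS ->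
     (v *m lact M a *m f - v *m f *m lact N a <= U')%MS) ->
  forall a m (X : 'M_(m, ldim M)), (X <= V)%MS ->
    (X *m lact M a *m f - X *m f *m lact N a <= U')%MS.
Proof.
move=> Hhom a m X sXV; apply/row_subP => i; rewrite linearB /= !row_mul.
exact/Hhom/(submx_trans (row_sub i X) sXV).
Qed.

End SubquotientIso.

Lemma chain_mono M (U V : 'M[F]_(ldim M)) k W s t :
  chain U V k W -> (s <= t <= k)%N -> (W s <= W t)%MS.
Proof.
case=> _ _ _ HW /andP[]; elim: t => [|t IHt]; first by rewrite leqn0 => /eqP->.
rewrite leq_eqVlt ltnS => /predU1P[-> // | /IHt sWsWt tk].
exact: submx_trans (sWsWt (ltnW tk)) (HW t tk).
Qed.

Lemma chain_bounds M (U V : 'M[F]_(ldim M)) k W t :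
  chain U V k W -> (t <= k)%N -> (U <= W t)%MS /\ (W t <= V)%MS.
Proof.
move=> HW tk; have [/andP[_ sUW0] /andP[sWkV _] _ _] := HW.
split; first exact: submx_trans sUW0 (chain_mono (s := 0) HW tk).
by apply: submx_trans sWkV; apply: chain_mono HW _; rewrite tk leqnn.
Qed.

(** * Subquotients annihilated by an element *)

Definition sq_annihilated e M (U V : 'M[F]_(ldim M)) := (V *m lact M e <= U)%MS.

Lemma sq_annihilatedS e M (U V U' V' : 'M[F]_(ldim M)) :
  (U <= U')%MS -> (V' <= V)%MS -> sq_annihilated e U V -> sq_annihilated e U' V'.
Proof. by move=> sUU' sV'V /(submx_trans (submxMr _ sV'V)) /submx_trans; apply. Qed.

Lemma sq_iso_annihilated e M N (U V : 'M[F]_(ldim M)) (U' V' : 'M[F]_(ldim N)) :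
  submod U' -> sq_iso M U V N U' V' -> sq_annihilated e U V -> sq_annihilated e U' V'.
Proof.
move=> HU' [f [_ sUfU' _ sV'Vf Hhom]] HeV; rewrite /sq_annihilated.
apply: (submx_trans (submxMr (lact N e) sV'Vf)).
rewrite addsmxMr addsmx_sub HU' andbT.
have sVefU' : (V *m lact M e *m f <= U')%MS by exact: submx_trans (submxMr f HeV) sUfU'.
rewrite -[V *m f *m _](subrK (V *m lact M e *m f)) -opprB addrC addmx_sub //.
by rewrite eqmx_opp (sq_iso_hom_mx Hhom).
Qed.

Lemma mult_is_annihilated e M (U V : 'M[F]_(ldim M)) S n :
  mult_is U V S n -> n != 0%N -> sq_annihilated e U V -> lact S e = 0.
Proof.
case=> k [W [[|t T] [[HW _] _ <- HT]]] //= _ HeV.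
have [tk Hiso] := (HT t).1 (mem_head _ _).
have [sUWt _] := chain_bounds HW (ltnW tk).
have [_ sWt1V] := chain_bounds HW tk.
have := sq_iso_annihilated (submod0 _) Hiso (sq_annihilatedS sUWt sWt1V HeV).
by rewrite /sq_annihilated mul1mx submx0 => /eqP.
Qed.

(** * Simple tops and socles *)

Lemma simple_submodP M (X : 'M[F]_(ldim M)) :
  simple_mod M -> submod X -> X = 0 \/ (X == 1%:M)%MS.
Proof.
case=> _ _ _ HM HX; case: (HM X HX (sub0mx _ _) (submx1 _)) => [/andP[]|]; last by right.
by rewrite submx0 => /eqP; left.
Qed.

Lemma simple_ldim_gt0 M : simple_mod M -> (0 < ldim M)%N.
Proof. by case=> _ _; rewrite lt0mx -mxrank_eq0 mxrank1 lt0n. Qed.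

Lemma miso_bij M N (h : 'M[F]_(ldim M, ldim N)) :
  mhom h -> row_free h -> row_full h -> miso M N.
Proof.
move=> Hh hfree hfull; exists h; split.
- exact: submx1.
- by rewrite mul0mx sub0mx.
- by move=> v _; rewrite !submx0 mulmx_free_eq0.
- by rewrite addsmx0 mul1mx sub1mx.
- by move=> a v _; rewrite -mulmxA Hh mulmxA subrr sub0mx.
Qed.

Lemma miso_kermx P M N (p : 'M[F]_(ldim P, ldim M)) (q : 'M[F]_(ldim P, ldim N)) :
  mhom p -> mhom q -> row_full p -> row_full q ->
  (kermx p <= kermx q)%MS -> (kermx q <= kermx p)%MS -> miso M N.
Proof.
move=> Hp Hq pfull qfull sKpKq sKqKp; set h := pinvmx p *m q.
have pK : pinvmx p *m p = 1%:M by rewrite mulVpmx.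
have pcancel Y Z : p *m Y = p *m Z -> Y = Z.
  by move=> pYZ; rewrite -[Y]mul1mx -[Z]mul1mx -pK -!mulmxA pYZ.
have ph : p *m h = q.
  rewrite /h mulmxA; apply/esym/eqP; rewrite -subr_eq0 -[q in q - _]mul1mx -mulmxBl.
  apply/eqP/sub_kermxP/(submx_trans _ sKpKq)/sub_kermxP.
  by rewrite mulmxBl -mulmxA pK mulmx1 mul1mx subrr.
apply: (@miso_bij _ _ h).
- by move=> a; apply: pcancel; rewrite mulmxA -Hp -mulmxA ph Hq -ph mulmxA.
- rewrite -kermx_eq0 -submx0.
  have : (kermx h *m pinvmx p <= kermx p)%MS.
    by apply: submx_trans sKqKp; apply/sub_kermxP; rewrite -mulmxA mulmx_ker.
  by move/sub_kermxP; rewrite -mulmxA pK mulmx1 => ->; apply: sub0mx.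
- by rewrite -sub1mx (submx_trans _ (submxMl p h)) // ph sub1mx.
Qed.

Lemma miso_img M N J (i : 'M[F]_(ldim M, ldim J)) (j : 'M[F]_(ldim N, ldim J)) :
  mhom i -> mhom j -> row_free i -> row_free j -> (i <= j)%MS -> (j <= i)%MS ->
  miso M N.
Proof.
move=> Hi Hj ifree jfree sij sji; set h := i *m pinvmx j.
have hj : h *m j = i by rewrite mulmxKpV.
have jcancel m (Y Z : 'M_(m, ldim N)) : Y *m j = Z *m j -> Y = Z.
  by move=> YZj; rewrite -(mulmxKp jfree Y) YZj mulmxKp.
apply: (@miso_bij _ _ h).
- by move=> a; apply: jcancel; rewrite -mulmxA hj Hi -hj -!mulmxA Hj.
- by apply/row_freeP; exists (j *m pinvmx i); rewrite mulmxA hj mulmxVp.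
- have /submxP[X jX] := sji; apply/row_fullP; exists X.
  by apply: jcancel; rewrite -mulmxA hj mul1mx -jX.
Qed.

Lemma kermx_sub_or_cover P S N (p : 'M[F]_(ldim P, ldim S)) (q : 'M[F]_(ldim P, ldim N)) :
  simple_mod S -> mhom p -> mhom q ->
  (kermx q <= kermx p)%MS \/ (1%:M <= kermx q + kermx p)%MS.
Proof.
move=> HS Hp Hq; case: (simple_submodP HS (submod_img Hp (submod_ker Hq))).
  by move/eqP; rewrite genmx_eq0 -sub_kermx; left.
by move=> /andP[_]; rewrite genmxE => /(submx_trans (submx1 p)) /sub1mx_addker; right.
Qed.

Lemma proj_cover_top P L S (psi : 'M[F]_(ldim P, ldim S)) :
  proj_cover P L -> simple_mod L -> simple_mod S -> mhom psi -> psi != 0 -> miso L S.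
Proof.
case=> _ _ [p [Hp p_full Hsuperfluous]] HL HS Hpsi psi_nz.
have psi_full : row_full psi.
  case: (simple_submodP HS (submod_imgmx Hpsi)).
    by move/eqP; rewrite genmx_eq0 (negbTE psi_nz).
  by rewrite -sub1mx => /andP[_]; rewrite genmxE.
have sKpsiKp : (kermx psi <= kermx p)%MS.
  case: (kermx_sub_or_cover HL Hp Hpsi) => // /(Hsuperfluous _ (submod_ker Hpsi)).
  by move/full_kermx_eq0/eqP; rewrite (negbTE psi_nz).
have sKpKpsi : (kermx p <= kermx psi)%MS.
  case: (kermx_sub_or_cover HS Hpsi Hp) => // cover.
  have /full_kermx_eq0 p0 : (1%:M <= kermx p)%MS.
    by rewrite (submx_trans cover) // addsmx_sub submx_refl sKpsiKp.
  by move: (simple_ldim_gt0 HL) p_full; rewrite /row_full p0 mxrank0 lt0n eq_sym => /negbTE->.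
apply: miso_kermx Hp Hpsi p_full psi_full sKpKpsi sKpsiKp.
Qed.

Lemma simple_img_sub S N (h : 'M[F]_(ldim S, ldim N)) (X : 'M[F]_(ldim N)) :
  simple_mod S -> mhom h -> row_free h -> submod X -> (X <= h)%MS -> X != 0 ->
  (h <= X)%MS.
Proof.
move=> HS Hh h_free HX sXh X_nz; set Y := X *m pinvmx h.
have YhX : Y *m h = X by rewrite mulmxKpV.
have HY : submod <<Y>>%MS.
  by apply: submod_genmx => a; rewrite -(submxMfree _ _ h_free) -mulmxA Hh mulmxA YhX.
case: (simple_submodP HS HY) => [/eqP | /andP[_]].
  by rewrite genmx_eq0 => /eqP Y0; move: X_nz; rewrite -YhX Y0 mul0mx eqxx.
by rewrite genmxE -YhX => /(submxMr h); rewrite mul1mx.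
Qed.

Lemma inj_hull_socle I L S (psi : 'M[F]_(ldim S, ldim I)) :
  inj_hull I L -> simple_mod L -> simple_mod S -> mhom psi -> psi != 0 -> miso S L.
Proof.
case=> _ _ [i [Hi i_free Hessential]] HL HS Hpsi psi_nz.
have psi_free : row_free psi.
  case: (simple_submodP HS (submod_ker Hpsi)) => [/eqP | /andP[_]].
    by rewrite kermx_eq0.
  by move/full_kermx_eq0/eqP; rewrite (negbTE psi_nz).
set Z := (<<psi>> :&: <<i>>)%MS.
have HZ : submod Z := submod_cap (submod_imgmx Hpsi) (submod_imgmx Hi).
have Z_nz : Z != 0.
  apply: contraNneq psi_nz => Z0; rewrite -genmx_eq0 -submx0.
  apply: Hessential (submod_imgmx Hpsi) _.
  by rewrite -(cap_eqmx (eqmx_refl _) (genmxE i)) -/Z Z0.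
have sZpsi : (Z <= psi)%MS by rewrite (submx_trans (capmxSl _ _)) ?genmxE.
have sZi : (Z <= i)%MS by rewrite (submx_trans (capmxSr _ _)) ?genmxE.
have spsii := submx_trans (simple_img_sub HS Hpsi psi_free HZ sZpsi Z_nz) sZi.
have sipsi := submx_trans (simple_img_sub HL Hi i_free HZ sZi Z_nz) sZpsi.
exact: miso_img Hpsi Hi psi_free i_free spsii sipsi.
Qed.

(** * Layers of filtrations *)

Lemma first_switch (p : pred nat) k :
  ~~ p 0%N -> p k -> exists2 t, (t < k)%N & ~~ p t && p t.+1.
Proof.
move=> p0 pk; have [[|t] pt1 tmin] := ex_minnP (ex_intro p k pk).
  by rewrite pt1 in p0.
exists t; first exact: tmin.
by rewrite pt1 andbT; apply/negP => /tmin; rewrite ltnn.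
Qed.

Lemma subr_submx_trans m n o (X Y Z : 'M[F]_(m, n)) (U : 'M[F]_(o, n)) :
  (X - Y <= U)%MS -> (Y - Z <= U)%MS -> (X - Z <= U)%MS.
Proof. by move=> sXY sYZ; rewrite -[X](subrK Y) -addrA addmx_sub. Qed.

Lemma subr_submx_sym m n o (X Y : 'M[F]_(m, n)) (U : 'M[F]_(o, n)) :
  (X - Y <= U)%MS -> (Y - X <= U)%MS.
Proof. by rewrite -opprB eqmx_opp. Qed.

Lemma sq_iso_pullback M N S (U V : 'M[F]_(ldim M)) (U' : 'M[F]_(ldim N))
    (phi : 'M[F]_(ldim M, ldim S)) :
  submod V -> submod U' -> sq_iso M U V N U' 1%:M ->
  mhom phi -> (U <= kermx phi)%MS -> ~~ (V <= kermx phi)%MS ->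
  exists2 psi : 'M[F]_(ldim N, ldim S), mhom psi & psi != 0.
Proof.
move=> HV HU' [f [_ _ Hinj Hsurj Hhom]] Hphi sUker sVker.
(* [g] inverts [f] modulo [U'], so [g *m phi] is [phi] read through the isomorphism. *)
have [g sgV gf1] : exists2 g : 'M_(ldim N, ldim M), (g <= V)%MS & (g *m f - 1%:M <= U')%MS.
  have [[g1 g2] /= ->] := sub_addsmxP Hsurj; exists (g1 *m V); first exact: submxMl.
  by rewrite -mulmxA opprD addrA subrr add0r eqmx_opp submxMl.
have ker_phi m (X : 'M_(m, ldim M)) : (X <= V)%MS -> (X *m f <= U')%MS -> X *m phi = 0.
  by move=> sXV sXfU; apply/sub_kermxP/(submx_trans (sq_iso_inj_mx Hinj sXV sXfU)).
exists (g *m phi).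
  move=> a; apply/eqP; rewrite -mulmxA -Hphi !mulmxA -subr_eq0 -mulmxBl.
  apply/eqP/ker_phi.
    by rewrite addmx_sub ?eqmx_opp ?(submx_trans (submxMl _ _) sgV) ?(submx_trans (submxMr _ sgV)).
  rewrite mulmxBl; apply: (@subr_submx_trans _ _ _ _ (lact N a)).
    by rewrite -mulmxA -{2}[lact N a]mulmx1 -mulmxBr (submx_trans (submxMl _ _) gf1).
  apply: (@subr_submx_trans _ _ _ _ (g *m f *m lact N a)).
    by rewrite -{1}[lact N a]mul1mx -mulmxBl (submx_trans (submxMr _ (subr_submx_sym gf1))).
  exact/subr_submx_sym/(sq_iso_hom_mx Hhom).
apply: contraNneq sVker => gphi0; apply/sub_kermxP.
have Y0 : (V *m f *m g - V) *m phi = 0.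
  apply: ker_phi; first by rewrite addmx_sub ?eqmx_opp // (submx_trans (submxMl _ _)).
  rewrite mulmxBl -[V *m f *m g *m f]mulmxA -{2}[V *m f]mulmx1 -mulmxBr.
  exact: submx_trans (submxMl _ _) gf1.
by move/eqP: Y0; rewrite mulmxBl -[V *m f *m g *m phi]mulmxA gphi0 mulmx0 sub0r oppr_eq0 => /eqP.
Qed.

Section FilteredLayers.
Variables (Q : Type) (L : Q -> lmod A) (p : Q -> Prop).
Hypothesis HL : forall j, simple_mod (L j).

Lemma filtered_top_layer (P : Q -> lmod A) (K : forall j, 'M[F]_(ldim (P j)))
    M (U V : 'M[F]_(ldim M)) S (phi : 'M[F]_(ldim M, ldim S)) :
  (forall j, proj_cover (P j) (L j)) -> (forall j, submod (K j)) ->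
  simple_mod S -> mhom phi -> (U <= kermx phi)%MS -> ~~ (V <= kermx phi)%MS ->
  filtered U V P K (fun _ => 1%:M) p ->
  exists U' V' j,
    [/\ (U <= U')%MS, (V' <= V)%MS, sq_iso M U' V' (P j) (K j) 1%:M & miso (L j) S].
Proof.
move=> HP HK HS Hphi sUker sVker [k [W [HW Hlayers]]].
have [/andP[sW0U _] /andP[_ sVWk] HWsub _] := HW.
have [t tk /andP[/negPn sWtker sWt1ker]] :
    exists2 t, (t < k)%N & ~~ ~~ (W t <= kermx phi)%MS && ~~ (W t.+1 <= kermx phi)%MS.
  apply: first_switch; first by rewrite negbK (submx_trans sW0U).
  by apply: contra sVker; apply: submx_trans.
have [j [_ Hiso]] := Hlayers t tk.
exists (W t), (W t.+1), j; split => //.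
- exact: (chain_bounds HW (ltnW tk)).1.
- exact: (chain_bounds HW tk).2.
have [psi Hpsi psi_nz] := sq_iso_pullback (HWsub _ tk) (HK j) Hiso Hphi sWtker sWt1ker.
exact: proj_cover_top (HP j) (HL j) HS Hpsi psi_nz.
Qed.

Lemma filtered_socle_layer (I : Q -> lmod A) (Nb : forall j, 'M[F]_(ldim (I j)))
    M (U V : 'M[F]_(ldim M)) S (phi : 'M[F]_(ldim S, ldim M)) :
  (forall j, inj_hull (I j) (L j)) ->
  simple_mod S -> mhom phi -> (phi <= V)%MS -> ~~ (phi <= U)%MS ->
  filtered U V I (fun _ => 0) Nb p ->
  exists U' V' j,
    [/\ (U <= U')%MS, (V' <= V)%MS, sq_iso M U' V' (I j) 0 (Nb j) & miso S (L j)].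
Proof.
move=> HI HS Hphi sphiV sphiU [k [W [HW Hlayers]]].
have [/andP[sW0U _] /andP[_ sVWk] _ _] := HW.
have [t tk /andP[sphiWt sphiWt1]] :
    exists2 t, (t < k)%N & ~~ (phi <= W t)%MS && (phi <= W t.+1)%MS.
  apply: first_switch; last exact: submx_trans sphiV sVWk.
  by apply: contra sphiU => /submx_trans; apply.
have [j [_ Hiso]] := Hlayers t tk.
exists (W t), (W t.+1), j; split => //.
- exact: (chain_bounds HW (ltnW tk)).1.
- exact: (chain_bounds HW tk).2.
have [f [_ _ Hinj _ Hhom]] := Hiso.
apply: (inj_hull_socle (HI j) (HL j) HS (psi := phi *m f)).
  move=> a; apply/eqP; rewrite mulmxA Hphi -subr_eq0 -submx0.
  exact: sq_iso_hom_mx Hhom a _ _ sphiWt1.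
apply: contraNneq sphiWt => phif0.
by apply: (sq_iso_inj_mx Hinj sphiWt1); rewrite phif0 sub0mx.
Qed.

End FilteredLayers.

(** * The quotient A/AeA and its dual *)

Definition coordrow (x : A) : 'rV[F]_(rdim A) := \row_j coord (rbasis A) j x.

Lemma coordrow_AeA e y : y \in AeA e -> (coordrow y <= AeAmx e)%MS.
Proof.
move=> Hy; apply/submxP; exists (\row_l coord (vbasis (AeA e)) l y).
apply/rowP => j; rewrite !mxE {1}(coord_vbasis Hy) linear_sum /=.
by apply: eq_bigr => l _; rewrite linearZ /= !mxE (tnth_nth 0).
Qed.

Lemma row_regmod a k : row k (lact (regmod A) a) = coordrow (a * tnth (rbasis A) k).
Proof. by apply/rowP => j; rewrite !mxE. Qed.

Lemma row_rmulmx a k : row k (rmulmx a) = coordrow (tnth (rbasis A) k * a).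
Proof. by apply/rowP => j; rewrite !mxE. Qed.

Lemma row_AeAmx e l : row l (AeAmx e) = coordrow (tnth (vbasis (AeA e)) l).
Proof. by apply/rowP => j; rewrite !mxE. Qed.

Lemma mem_AeA_mull e x : e * x \in AeA e.
Proof. by rewrite -[e * x]mul1r mulrA !memv_mul ?memvf ?memv_line. Qed.

Lemma mem_AeA_mulr e x : x * e \in AeA e.
Proof. by rewrite -[x * e]mulr1 !memv_mul ?memvf ?memv_line. Qed.

Lemma sq_annihilated_quot e : sq_annihilated e (M := regmod A) (quot_lo e) 1%:M.
Proof.
rewrite /sq_annihilated mul1mx genmxE; apply/row_subP => k.
by rewrite row_regmod coordrow_AeA ?mem_AeA_mull.
Qed.

Lemma sq_annihilated_dquot e : sq_annihilated e (M := dualreg A) 0 (dquot e).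
Proof.
have /submxP[D De] : (rmulmx e <= AeAmx e)%MS.
  by apply/row_subP => k; rewrite row_rmulmx coordrow_AeA ?mem_AeA_mulr.
by rewrite /sq_annihilated /= De trmx_mul mulmxA mulmx_ker mul0mx.
Qed.

Section HomsFromQuotient.
Variables (S : lmod A) (e : A).
Hypotheses (HS : lmodP S) (S_gt0 : (0 < ldim S)%N) (eS : lact S e = 0).

Let r0 := Ordinal S_gt0.

Lemma lact_entry x r c :
  lact S x r c = \sum_k coord (rbasis A) k x * lact S (tnth (rbasis A) k) r c.
Proof. by rewrite (lact_coord HS x) summxE; apply: eq_bigr => k _; rewrite mxE. Qed.

Lemma quot_hom_nz : exists phi : 'M[F]_(rdim A, ldim S),
  [/\ mhom (M := regmod A) phi, (quot_lo e <= kermx phi)%MS & ~~ (1%:M <= kermx phi)%MS].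
Proof.
set v0 := row r0 (1%:M : 'M[F]_(ldim S)).
(* the orbit map a |-> a . v0 *)
pose phi := \matrix_k (v0 *m lact S (tnth (rbasis A) k)).
have phi_coord x : coordrow x *m phi = v0 *m lact S x.
  rewrite mulmx_sum_row (lact_coord HS x) mulmx_sumr; apply: eq_bigr => k _.
  by rewrite rowK mxE scalemxAr.
exists phi; split.
- by move=> a; apply/row_matrixP => k; rewrite !row_mul row_regmod phi_coord rowK lactM // mulmxA.
- rewrite genmxE sub_kermx; apply/eqP/row_matrixP => l.
  by rewrite row_mul row_AeAmx phi_coord row0 (lact_AeA_eq0 HS eS) ?vbasis_mem ?mem_tnth ?mulmx0.
- apply/negP => /full_kermx_eq0 phi0.
  have := phi_coord 1; rewrite phi0 mulmx0 lact1 // mulmx1 => /rowP/(_ r0).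
  by rewrite !mxE eqxx; apply/eqP; rewrite eq_sym oner_eq0.
Qed.

Lemma dquot_hom_nz : exists phi : 'M[F]_(ldim S, rdim A),
  [/\ mhom (N := dualreg A) phi, (phi <= dquot e)%MS & ~~ (phi <= (0 : 'M_(rdim A)))%MS].
Proof.
(* row r is the functional x |-> (lact S x) r r0 *)
exists (\matrix_(r, k) lact S (tnth (rbasis A) k) r r0); split.
- move=> a; apply/matrixP => r k.
  transitivity (lact S (tnth (rbasis A) k * a) r r0).
    by rewrite lactM // !mxE; apply: eq_bigr => s _; rewrite mxE.
  by rewrite /= mxE lact_entry; apply: eq_bigr => l _; rewrite !mxE mulrC.
- rewrite /dquot sub_kermx; apply/eqP/matrixP => r l.
  have := lact_entry (tnth (vbasis (AeA e)) l) r r0.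
  rewrite (lact_AeA_eq0 HS eS) ?vbasis_mem ?mem_tnth // !mxE => H.
  by rewrite [RHS]H; apply: eq_bigr => k _; rewrite !mxE mulrC.
- apply/negP; rewrite submx0 => /eqP phi0.
  have := lact_entry 1 r0 r0; rewrite lact1 // mxE eqxx big1 => [|k _].
    by move/eqP; rewrite oner_eq0.
  by have := congr1 (fun X : 'M_(_, _) => X r0 k) phi0; rewrite !mxE => ->; rewrite mulr0.
Qed.

End HomsFromQuotient.

End ModuleTheory.

Unset Implicit Arguments.
Set Strict Implicit.

Theorem lemma3p16
  (F : fieldType) (A : falgType F)
  (d : Order.disp_t) (Q : finPOrderType d)
  (* simple modules L_i, labelled by Q *)
  (L : Q -> lmod A)
  (HLmod : forall i, lmodP (L i))
  (HLsimple : forall i, simple_mod (L i))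
  (HLdistinct : forall i j, miso (L i) (L j) -> i = j)
  (HLall : forall S : lmod A, lmodP S -> simple_mod S -> exists i, miso S (L i))
  (* projective covers P_i and the kernels K_i of P_i -> Delta_i *)
  (P : Q -> lmod A) (HP : forall i, proj_cover (P i) (L i))
  (K : forall i, 'M[F]_(ldim (P i)))
  (HKsub : forall i, submod (K i))
  (HKfac : forall i, factors_in (K i) 1%:M L (fun j => (j <= i)%O))
  (HKmin : forall i (U : 'M[F]_(ldim (P i))), submod U ->
             factors_in U 1%:M L (fun j => (j <= i)%O) -> (K i <= U)%MS)
  (* injective hulls I_i, costandard N_i = nabla_i, proper costandard Nb_i *)
  (I : Q -> lmod A) (HI : forall i, inj_hull (I i) (L i))
  (N Nb : forall i, 'M[F]_(ldim (I i)))
  (HNsub : forall i, submod (N i))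
  (HNfac : forall i, factors_in 0 (N i) L (fun j => (j <= i)%O))
  (HNmax : forall i (U : 'M[F]_(ldim (I i))), submod U ->
             factors_in 0 U L (fun j => (j <= i)%O) -> (U <= N i)%MS)
  (HNbsub : forall i, submod (Nb i))
  (HNbN : forall i, (Nb i <= N i)%MS)
  (HNbmult : forall i, mult_is 0 (Nb i) (L i) 1)
  (HNbmax : forall i (U : 'M[F]_(ldim (I i))), submod U -> (U <= N i)%MS ->
             mult_is 0 U (L i) 1 -> (U <= Nb i)%MS)
  (* A is left standardly stratified *)
  (Hstrat : forall i, filtered (M := P i) 0 (K i) P K (fun j => 1%:M)
                        (fun j => (i < j)%O))
  (* the idempotent e; its support is Q0' *)
  (e : A) (He : e * e = e)
  (* A/AeA has a Delta-filtration *)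
  (HDelta : filtered (M := regmod A) (quot_lo e) 1%:M P K (fun j => 1%:M)
              (fun _ => True))
  (* D(A/AeA) has a proper-costandard filtration *)
  (HNabla : filtered (M := dualreg A) 0 (dquot e) I (fun j => 0) Nb
              (fun _ => True)) :
  coideal
    (rt_closure (fun j i : Q =>
       (exists n, n <> 0%N /\ mult_is (K i) 1%:M (L j) n) \/
       (exists n, n <> 0%N /\ mult_is 0 (Nb i) (L j) n)))
    (supp L e).
Proof.
move=> j i; elim=> {j i} [j i Rji | // | j k i _ IHjk _ IHki]; last by move=> /IHjk/IHki.
rewrite /supp; apply: contraNN => /eqP eLi; apply/eqP.
have Li_gt0 := simple_ldim_gt0 (HLsimple i).
case: Rji => [[n [/eqP n_nz Hn]] | [n [/eqP n_nz Hn]]].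
- have [phi [Hphi sAeAker s1ker]] := quot_hom_nz (HLmod i) Li_gt0 eLi.
  have [U [V [j' [sAeAU _ Hiso Lj'i]]]] :=
    filtered_top_layer HLsimple HP HKsub (HLsimple i) Hphi sAeAker s1ker HDelta.
  rewrite (HLdistinct _ _ Lj'i) in Hiso.
  apply: mult_is_annihilated Hn n_nz _; apply: sq_iso_annihilated (HKsub i) Hiso _.
  exact: sq_annihilatedS sAeAU (submx1 _) (sq_annihilated_quot e).
- have [phi [Hphi sphiD sphi0]] := dquot_hom_nz (HLmod i) Li_gt0 eLi.
  have [U [V [j' [_ sVD Hiso Lij']]]] :=
    filtered_socle_layer HLsimple HI (HLsimple i) Hphi sphiD sphi0 HNabla.
  rewrite -(HLdistinct _ _ Lij') in Hiso.
  apply: mult_is_annihilated Hn n_nz _; apply: sq_iso_annihilated (submod0 _) Hiso _.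
  exact: sq_annihilatedS (sub0mx _ _) sVD (sq_annihilated_dquot e).
Qed.
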